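(* Let $A\neq0$ be a real $m\times n$ matrix, let $\varepsilon>0$, and let $\beta\in\mathbb R_m$ be such that $\beta^T$ lies in the range of $A$. Then $S(A,\beta)$ is a proper subset of $S(A,\beta,\varepsilon)$.
   Context: $\mathbb R_m$ denotes real row vectors of length $m$, $\mathbb R_m^+$ (resp. $\mathbb R_n^+$) those with all entries strictly positive. For $c\in\mathbb R_m^+$, $\alpha\in\mathbb R_m$, $c^\alpha:=\prod_i c_i^{\alpha_i}$. For a real $m\times n$ matrix $A$ with columns $\alpha_1^T,\dots,\alpha_n^T$, $\beta\in\mathbb R_m$ and $\varepsilon\ge0$, $S(A,\beta,\varepsilon)$ is the set of all $F:\mathbb R_n^+\to\mathbb R$ with $$|F(v_1c^{\alpha_1},\dots,v_nc^{\alpha_n})-F(v_1,\dots,v_n)c^\beta|\le\varepsilon|F(v_1,\dots,v_n)|c^\beta$$ for all $v_1,\dots,v_n>0$ and all $c\in\mathbb R_m^+$; $S(A,\beta):=S(A,\beta,0)$. *)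

From Stdlib Require Import Reals Lra Lia Arith.
Open Scope R_scope.

Fixpoint prodR (m : nat) (f : nat -> R) : R :=
  match m with
  | O => 1
  | S k => prodR k f * f k
  end.

Fixpoint sumR (n : nat) (f : nat -> R) : R :=
  match n with
  | O => 0
  | S k => sumR k f + f k
  end.

(* A real m x n matrix is represented by its entries A i j for i < m, j < n
   (entries outside this range are irrelevant); row vectors of length m by
   functions nat -> R, of which only the first m entries matter. *)

Definition cpow (m : nat) (c alpha : nat -> R) : R :=
  prodR m (fun i => Rpower (c i) (alpha i)).

Definition posvec (k : nat) (v : nat -> R) : Prop := forall i, (i < k)%nat -> 0 < v i.

Definition scaled (m n : nat) (A : nat -> nat -> R) (c v : nat -> R) : nat -> R :=
  fun j => if (j <? n)%nat then v j * cpow m c (fun i => A i j) else v j.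

Definition S_eps (m n : nat) (A : nat -> nat -> R) (beta : nat -> R) (eps : R)
  (F : (nat -> R) -> R) : Prop :=
  forall v c, posvec n v -> posvec m c ->
    Rabs (F (scaled m n A c v) - F v * cpow m c beta)
      <= eps * Rabs (F v) * cpow m c beta.

Definition S0 (m n : nat) (A : nat -> nat -> R) (beta : nat -> R) :=
  S_eps m n A beta 0.

(* The monomial v^x := prod_j v_j^{x_j}, with A x = beta^T, lies in S(A, beta):
   scaling v by the columns of A multiplies it by c^{A x} = c^beta.  Multiplying
   an element of S(A, beta) by any weight with values in [1, 1 + eps] gives an
   element of S(A, beta, eps), whereas exact homogeneity forces the weight to be
   invariant under the scalings.  The weight 1 + eps [v_{j0} >= 1] is not: a
   column j0 with some A_{i0 j0} <> 0 lets a suitable c move v = 1 to a point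
   with v_{j0} = e^{-1}. *)

From Stdlib Require Import Reals Lra Lia Arith.
Open Scope R_scope.

Lemma sumR_ext n f g : (forall i, (i < n)%nat -> f i = g i) -> sumR n f = sumR n g.
Proof.
  induction n as [|n IH]; intros Hfg; simpl; auto.
  rewrite IH by (intros; apply Hfg; lia). now rewrite Hfg by lia.
Qed.

Lemma sumR_plus n f g : sumR n (fun i => f i + g i) = sumR n f + sumR n g.
Proof. induction n as [|n IH]; simpl; [lra | rewrite IH; lra]. Qed.

Lemma sumR_mult_l n a f : a * sumR n f = sumR n (fun i => a * f i).
Proof. induction n as [|n IH]; simpl; [lra | rewrite <- IH; lra]. Qed.

Lemma sumR_comm n m f :
  sumR n (fun j => sumR m (fun i => f i j)) = sumR m (fun i => sumR n (fun j => f i j)).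
Proof.
  induction n as [|n IH]; simpl.
  - induction m; simpl; lra.
  - now rewrite IH, <- sumR_plus.
Qed.

Lemma sumR_delta m k a : (k < m)%nat -> sumR m (fun i => if (i =? k)%nat then a else 0) = a.
Proof.
  induction m as [|m IH]; intros Hk; simpl; [lia |].
  destruct (Nat.eqb_spec m k) as [-> | Hmk].
  - rewrite (sumR_ext _ _ (fun _ => 0)), Rplus_comm.
    + clear. induction k; simpl; lra.
    + intros i Hi. destruct (Nat.eqb_spec i k); [lia | reflexivity].
  - rewrite IH by lia. lra.
Qed.

Lemma prodR_exp m f : prodR m (fun i => exp (f i)) = exp (sumR m f).
Proof. induction m as [|m IH]; simpl; [now rewrite exp_0 | now rewrite IH, exp_plus]. Qed.

Lemma cpow_exp m c a : cpow m c a = exp (sumR m (fun i => a i * ln (c i))).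
Proof. apply prodR_exp. Qed.

Lemma cpow_pos m c a : 0 < cpow m c a.
Proof. rewrite cpow_exp. apply exp_pos. Qed.

Lemma scaled_lt m n A c v j :
  (j < n)%nat -> scaled m n A c v j = v j * cpow m c (fun i => A i j).
Proof. intros Hj. unfold scaled. now replace (j <? n)%nat with true by (symmetry; now apply Nat.ltb_lt). Qed.

Lemma cpow_exp_delta m k t a :
  (k < m)%nat -> cpow m (fun i => exp (if (i =? k)%nat then t else 0)) a = exp (a k * t).
Proof.
  intros Hk. rewrite cpow_exp. f_equal.
  rewrite <- (sumR_delta m k (a k * t)) by exact Hk.
  apply sumR_ext. intros i _. rewrite ln_exp.
  destruct (Nat.eqb_spec i k) as [-> |]; [reflexivity | ring].
Qed.

Definition monomial (n : nat) (x v : nat -> R) : R := exp (sumR n (fun j => x j * ln (v j))).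

Lemma monomial_scaled m n A x beta c v :
  (forall i, (i < m)%nat -> sumR n (fun j => A i j * x j) = beta i) -> posvec n v ->
  monomial n x (scaled m n A c v) = monomial n x v * cpow m c beta.
Proof.
  intros Hx Hv. unfold monomial. rewrite cpow_exp, <- exp_plus. f_equal.
  rewrite (sumR_ext n _ (fun j => x j * ln (v j) + sumR m (fun i => A i j * x j * ln (c i)))).
  - rewrite sumR_plus, sumR_comm. f_equal. apply sumR_ext. intros i Hi.
    rewrite <- Hx, Rmult_comm, sumR_mult_l by exact Hi. apply sumR_ext. intros; ring.
  - intros j Hj. rewrite scaled_lt, ln_mult, cpow_exp, ln_exp by auto using cpow_pos.
    rewrite Rmult_plus_distr_l, sumR_mult_l. f_equal. apply sumR_ext. intros; ring.
Qed.

Lemma monomial_S0 m n A x beta :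
  (forall i, (i < m)%nat -> sumR n (fun j => A i j * x j) = beta i) ->
  S0 m n A beta (monomial n x).
Proof.
  intros Hx v c Hv _. rewrite (monomial_scaled m n A x beta) by auto.
  rewrite Rminus_diag, Rabs_R0. lra.
Qed.

Lemma S0_S_eps m n A beta eps F : 0 <= eps -> S0 m n A beta F -> S_eps m n A beta eps F.
Proof.
  intros Heps HF v c Hv Hc. eapply Rle_trans; [exact (HF v c Hv Hc) |].
  pose proof (Rabs_pos (F v)). pose proof (cpow_pos m c beta).
  rewrite !Rmult_0_l. apply Rmult_le_pos; [apply Rmult_le_pos |]; lra.
Qed.

Lemma S0_eq m n A beta F v c :
  S0 m n A beta F -> posvec n v -> posvec m c ->
  F (scaled m n A c v) = F v * cpow m c beta.
Proof.
  intros HF Hv Hc. specialize (HF v c Hv Hc). rewrite !Rmult_0_l in HF.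
  apply Rminus_diag_uniq. destruct (Req_dec (F (scaled m n A c v) - F v * cpow m c beta) 0)
    as [| Hne]; [assumption |].
  pose proof (Rabs_pos (F (scaled m n A c v) - F v * cpow m c beta)).
  now destruct (Rabs_no_R0 _ Hne); apply Rle_antisym.
Qed.

Lemma S0_mul_weight_S_eps m n A beta eps G g :
  S0 m n A beta G -> (forall v, 1 <= g v <= 1 + eps) ->
  S_eps m n A beta eps (fun v => G v * g v).
Proof.
  intros HG Hg v c Hv Hc. rewrite (S0_eq m n A beta G v c) by auto.
  set (s := scaled m n A c v). set (C := cpow m c beta).
  assert (HC : 0 < C) by apply cpow_pos.
  assert (Hdiff : Rabs (g s - g v) <= eps * g v).
  { pose proof (Hg s). pose proof (Hg v). apply Rabs_le; nra. }
  replace (G v * C * g s - G v * g v * C) with (G v * C * (g s - g v)) by ring.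
  pose proof (Hg v). pose proof (Rabs_pos (G v)).
  rewrite !Rabs_mult, (Rabs_right C), (Rabs_right (g v)) by lra.
  replace (eps * (Rabs (G v) * g v) * C) with (Rabs (G v) * C * (eps * g v)) by ring.
  apply Rmult_le_compat_l; [nra | exact Hdiff].
Qed.

Lemma S0_mul_weight_invariant m n A beta G g v c :
  S0 m n A beta (fun w => G w * g w) -> S0 m n A beta G -> G v <> 0 ->
  posvec n v -> posvec m c -> g (scaled m n A c v) = g v.
Proof.
  intros HGg HG HGv Hv Hc.
  pose proof (S0_eq m n A beta _ v c HGg Hv Hc) as Heq; cbv beta in Heq.
  rewrite (S0_eq m n A beta G v c HG Hv Hc) in Heq.
  pose proof (cpow_pos m c beta).
  apply (Rmult_eq_reg_l (G v * cpow m c beta)); [lra | apply Rmult_integral_contrapositive; lra].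
Qed.

Theorem mainTheorem8 (m n : nat) (A : nat -> nat -> R) (beta : nat -> R) (eps : R) :
  (exists i j, (i < m)%nat /\ (j < n)%nat /\ A i j <> 0) ->
  0 < eps ->
  (exists x : nat -> R, forall i, (i < m)%nat -> sumR n (fun j => A i j * x j) = beta i) ->
  (forall F, S0 m n A beta F -> S_eps m n A beta eps F) /\
  (exists F, S_eps m n A beta eps F /\ ~ S0 m n A beta F).
Proof.
  intros [i0 [j0 [Hi0 [Hj0 HA]]]] Heps [x Hx]. split.
  - intros F. apply S0_S_eps. lra.
  - set (g := fun v : nat -> R => 1 + eps * (if Rle_dec 1 (v j0) then 1 else 0)).
    exists (fun v => monomial n x v * g v). split.
    + apply S0_mul_weight_S_eps; [now apply monomial_S0 |].
      intros v. unfold g. destruct Rle_dec; lra.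
    + intros HS0.
      set (c := fun i => exp (if (i =? i0)%nat then - / A i0 j0 else 0)).
      assert (Hv : posvec n (fun _ => 1)) by (intros j _; lra).
      assert (Hc : posvec m c) by (intros i _; apply exp_pos).
      assert (Hs : scaled m n A c (fun _ => 1) j0 = exp (-1)).
      { unfold c. rewrite scaled_lt, cpow_exp_delta, Rmult_1_l by assumption.
        f_equal. field. exact HA. }
      assert (He : exp (-1) < 1) by (rewrite <- exp_0; apply exp_increasing; lra).
      pose proof (S0_mul_weight_invariant m n A beta (monomial n x) g (fun _ => 1) c
                    HS0 (monomial_S0 m n A x beta Hx) (Rgt_not_eq _ _ (exp_pos _)) Hv Hc) as Hg.
      unfold g in Hg. rewrite Hs in Hg.
      destruct (Rle_dec 1 (exp (-1))); destruct (Rle_dec 1 1); lra.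
Qed.
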